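(* For $\varepsilon\in(0,1)$, the set $S^A$ described below is a feasible solution of PKP with $\prod_{j\in S^A}p_j\ge(1-\varepsilon)z^*$, where $z^*$ is the optimal value of the PKP instance.
   Context: The Product Knapsack Problem (PKP): items $j\in N=\{1,\dots,n\}$ with integer weights $w_j$ and integer profits $p_j$, and a positive integer capacity $C$; find $S\subseteq N$ with $\sum_{j\in S}w_j\le C$ maximizing $\prod_{j\in S}p_j$ (the empty set has value $0$). Instances satisfy: (a) $w_j\le C$; (b) $p_j\ne 0$; (c) for each $j$ with $p_j<0$ there is $j'\ne j$ with $p_{j'}<0$ and $w_j+w_{j'}\le C$; (d) $w_j\ge 0$; (e) $p_j<0$ whenever $w_j=0$. Let $N^-=\{j:p_j\le -1\}$, $p_{\max}=\max_j|p_j|$, and assume $p_{\max}\ge 2$; $\log$ is base 2. Set $K=\varepsilon/n^2$ and scaled profits $\tilde p_j=\lfloor \log(|p_j|)/K\rfloor$. The set $S^A$ is computed by dynamic programming over the arrays $W^+_j(\tilde p)$, $W^-_j(\tilde p)$ (minimum total weight of a subset of $\{1,\dots,j\}$ with scaled-profit sum exactly $\tilde p$ and an even, resp. odd, number of items of $N^-$) and is the set represented by $W^+_n(\tilde p)$ for $\tilde p=\max\{\tilde p:W^+_n(\tilde p)\le C\}$; thus $S^A$ satisfies $\sum_{j\in S^A}w_j\le C$, $|S^A\cap N^-|$ is even, and $S^A$ maximizes $\sum_{j\in S}\tilde p_j$ among all such subsets $S\subseteq N$. *)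

From mathcomp Require Import all_boot all_order all_algebra.
From mathcomp Require Import reals exp.
Set Implicit Arguments. Unset Strict Implicit. Unset Printing Implicit Defensive.
Import Order.TTheory GRing.Theory Num.Theory.
Local Open Scope ring_scope.

Definition pkp_weight (n : nat) (w : 'I_n -> int) (S : {set 'I_n}) : int :=
  \sum_(j in S) w j.

Definition pkp_feasible (n : nat) (w : 'I_n -> int) (C : int) (S : {set 'I_n}) : bool :=
  pkp_weight w S <= C.

Definition pkp_value (n : nat) (p : 'I_n -> int) (S : {set 'I_n}) : int :=
  if S == set0 then 0 else \prod_(j in S) p j.

(* optimal value z^* : maximum of the objective over all feasible subsets
   (the empty set is feasible with value 0, so 0 is a valid seed) *)
Definition pkp_opt (n : nat) (w p : 'I_n -> int) (C : int) : int :=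
  \big[Num.max/0]_(S : {set 'I_n} | pkp_feasible w C S) pkp_value p S.

Definition Nneg (n : nat) (p : 'I_n -> int) : {set 'I_n} := [set j | p j <= -1].

Definition pkp_instance (n : nat) (w p : 'I_n -> int) (C : int) : Prop :=
  0 < C /\
  [/\ (forall j, w j <= C),
      (forall j, p j != 0),
      (forall j, p j < 0 -> exists j', [/\ j' != j, p j' < 0 & w j + w j' <= C]),
      (forall j, 0 <= w j)
    & (forall j, w j = 0 -> p j < 0)].

Definition pmax (n : nat) (p : 'I_n -> int) : int := \max_(j < n) `|p j|.

Definition log2 {R : realType} (x : R) : R := ln x / ln 2.

Definition scaleK {R : realType} (eps : R) (n : nat) : R := eps / (n%:R ^+ 2).

Definition ptilde {R : realType} (eps : R) (n : nat) (p : 'I_n -> int) (j : 'I_n) : int :=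
  Num.floor (log2 ((`|p j|)%:~R : R) / scaleK eps n).

Definition is_SA {R : realType} (eps : R) (n : nat) (w p : 'I_n -> int) (C : int)
    (S : {set 'I_n}) : Prop :=
  [/\ pkp_weight w S <= C,
      ~~ odd #|S :&: Nneg p|
    & forall T : {set 'I_n}, pkp_weight w T <= C -> ~~ odd #|T :&: Nneg p| ->
        \sum_(j in T) ptilde eps p j <= \sum_(j in S) ptilde eps p j].

(* An optimal solution with positive value has an even number of negative
   profits, so, like S^A, its value is the product of the |p_j|.  Comparing
   such products is comparing the sums of the ln |p_j| = (ln 2 * K) * t_j,
   where t_j = log |p_j| / K and ptilde_j = floor t_j.  Since S^A maximises
   the sum of the ptilde_j, flooring loses less than one unit of t per item,
   so ln z^* - ln prod_(S^A) p_j <= ln 2 * K * n = ln 2 * eps / n <= eps, and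
   exp (- eps) >= 1 - eps. *)
From mathcomp Require Import all_boot all_order all_algebra.
From mathcomp Require Import reals exp.
From mathcomp Require Import sequences.
From mathcomp Require Import ring.
Import Order.TTheory GRing.Theory Num.Theory.
Local Open Scope ring_scope.

Lemma prod_sign_Nneg {n : nat} (p : 'I_n -> int) (S : {set 'I_n}) :
  \prod_(j in S) p j = (-1) ^+ #|S :&: Nneg p| * \prod_(j in S) `|p j|.
Proof.
rewrite (eq_bigr (fun j => (-1) ^+ (p j < 0)%R * `|p j|)); last first.
  by move=> j _; rewrite mulr_sign_norm.
rewrite big_split /=; congr (_ * _).
rewrite (bigID (fun j => p j < 0)) /= [X in _ * X]big1 ?mulr1; last first.
  by move=> j /andP[_ /negbTE ->].
rewrite (eq_bigr (fun _ => -1)); last by move=> j /andP[_ ->].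
rewrite prodr_const; congr (_ ^+ _); apply: eq_card => j.
by rewrite !inE -ltzD1 addrC subrr.
Qed.

Lemma prod_even_Nneg {n : nat} (p : 'I_n -> int) (S : {set 'I_n}) :
  ~~ odd #|S :&: Nneg p| -> \prod_(j in S) p j = \prod_(j in S) `|p j|.
Proof. by move=> evenS; rewrite prod_sign_Nneg -signr_odd (negbTE evenS) mul1r. Qed.

Lemma prod_gt0_even_Nneg {n : nat} (p : 'I_n -> int) (S : {set 'I_n}) :
  0 < \prod_(j in S) p j -> ~~ odd #|S :&: Nneg p|.
Proof.
apply: contraTN => oddS; rewrite prod_sign_Nneg -signr_odd oddS mulN1r.
by rewrite -leNgt oppr_le0 prodr_ge0.
Qed.

Lemma pkp_opt_gt0_witness {n : nat} {w p : 'I_n -> int} {C : int} :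
  0 < pkp_opt w p C ->
  exists2 S, pkp_feasible w C S & pkp_opt w p C = \prod_(j in S) p j.
Proof.
have [|[S feasS ->]] : pkp_opt w p C = 0 \/
    exists2 S, pkp_feasible w C S & pkp_opt w p C = pkp_value p S.
- apply: (big_ind (fun x => x = 0 \/ exists2 S, pkp_feasible w C S & x = pkp_value p S)).
  + by left.
  + by move=> x y ? ?; rewrite /Num.max; case: ifP.
  + by move=> S feasS; right; exists S.
- by move=> ->; rewrite ltxx.
- by rewrite /pkp_value; case: ifP => [_|_ _]; [rewrite ltxx | exists S].
Qed.

Lemma sum_floor_le {R : realType} {I : finType} (A : {pred I}) (t : I -> R) :
  \sum_(j in A) (Num.floor (t j))%:~R <= \sum_(j in A) t j.
Proof. by apply: ler_sum => j _; rewrite floor_le. Qed.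

Lemma sum_le_floorD_card {R : realType} {I : finType} (A : {pred I}) (t : I -> R) :
  \sum_(j in A) t j <= \sum_(j in A) (Num.floor (t j))%:~R + #|A|%:R.
Proof.
rewrite -sum1_card natr_sum -big_split /=.
by apply: ler_sum => j _; rewrite -[1]/(1%:~R) -intrD ltW // floorD1_gt.
Qed.

Lemma ln_norm_scaleK {R : realType} (eps : R) {n : nat} (p : 'I_n -> int) (j : 'I_n) :
  eps != 0 -> (0 < n)%N ->
  ln ((`|p j|)%:~R : R) = ln 2 * scaleK eps n * (log2 ((`|p j|)%:~R : R) / scaleK eps n).
Proof.
move=> eps_neq0 n_gt0; have ln2_neq0 : ln (2 : R) != 0 by rewrite gt_eqF // ln_gt0 // ltr1n.
have K_neq0 : scaleK eps n != 0 by rewrite mulf_neq0 // invr_eq0 expf_neq0 // pnatr_eq0 -lt0n.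
by rewrite /log2; field; apply/andP.
Qed.

Lemma ln2_le1 (R : realType) : ln (2 : R) <= 1.
Proof. by have := @le_ln1Dx R 1; rewrite -[1 + 1]/2; apply; rewrite (lt_trans (ltrN10 R)). Qed.

Lemma sum_ln_norm_le_ptilde {R : realType} (eps : R) {n : nat} (p : 'I_n -> int)
    (S T : {set 'I_n}) :
  0 < eps ->
  \sum_(j in S) ptilde eps p j <= \sum_(j in T) ptilde eps p j ->
  \sum_(j in S) ln ((`|p j|)%:~R : R) <= \sum_(j in T) ln ((`|p j|)%:~R : R) + eps.
Proof.
case: n p S T => [|n] p S T eps_gt0 le_ptilde.
  by rewrite !big_ord0 add0r ltW.
set K := scaleK eps n.+1; set c := ln (2 : R) * K.
set t := fun j => log2 ((`|p j|)%:~R : R) / K.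
have K_gt0 : 0 < K by rewrite divr_gt0 // exprn_gt0.
have c_ge0 : 0 <= c by rewrite mulr_ge0 ?ltW // ln_gt0 // ltr1n.
have cn_le : c * n.+1%:R <= eps.
  have -> : c * n.+1%:R = ln 2 * eps / n.+1%:R.
    by rewrite /c /K /scaleK; field; rewrite addrC natr1 pnatr_eq0.
  rewrite ler_pdivrMr ?ltr0n // mulrC ler_pM2l //.
  by rewrite (le_trans (ln2_le1 R)) // ler1n.
rewrite !(eq_bigr _ (fun j _ => ln_norm_scaleK eps p j (lt0r_neq0 eps_gt0) (ltn0Sn n))).
rewrite -/K -/c -!mulr_sumr -/t.
apply: (le_trans (y := c * (\sum_(j in T) t j + n.+1%:R))); last first.
  by rewrite mulrDr lerD2l.
apply: ler_wpM2l => //; apply: (le_trans (sum_le_floorD_card S t)).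
apply: lerD.
- apply: le_trans (sum_floor_le _ t); rewrite -!rmorph_sum ler_int; exact: le_ptilde.
- by rewrite ler_nat (leq_trans (max_card _)) ?card_ord.
Qed.

Lemma prod_norm_expR {R : realType} {n : nat} (p : 'I_n -> int) (S : {set 'I_n}) :
  (forall j, p j != 0) ->
  ((\prod_(j in S) `|p j|)%:~R : R) = expR (\sum_(j in S) ln ((`|p j|)%:~R : R)).
Proof.
move=> p_neq0; rewrite rmorph_prod expR_sum; apply: eq_bigr => j _.
by rewrite lnK // posrE ltr0z normr_gt0.
Qed.

Theorem proposition2 (R : realType) (n : nat) (w p : 'I_n -> int) (C : int)
    (eps : R) (SA : {set 'I_n}) :
  pkp_instance w p C ->
  2 <= pmax p ->
  0 < eps < 1 ->
  is_SA eps w p C SA ->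
  pkp_feasible w C SA /\
  (1 - eps) * (pkp_opt w p C)%:~R <= ((\prod_(j in SA) p j)%:~R : R).
Proof.
move=> [_ [_ p_neq0 _ _ _]] _ /andP[eps_gt0 eps_lt1] [feasSA evenSA maxSA].
split; first exact: feasSA.
rewrite prod_even_Nneg // prod_norm_expR //.
have [opt_le0|opt_gt0] := lerP (pkp_opt w p C) 0.
  apply/(le_trans _ (expR_ge0 _))/mulr_ge0_le0; last by rewrite lerz0.
  by rewrite subr_ge0 ltW.
have [S feasS optS] := pkp_opt_gt0_witness opt_gt0.
have evenS : ~~ odd #|S :&: Nneg p| by apply: prod_gt0_even_Nneg; rewrite -optS.
rewrite optS prod_even_Nneg // prod_norm_expR //.
apply: (le_trans (y := expR (- eps) * expR (\sum_(j in S) ln ((`|p j|)%:~R : R)))).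
  by rewrite ler_wpM2r ?expR_ge0 // expR_ge1Dx.
rewrite -expRD ler_expR addrC lerBlDr.
exact/sum_ln_norm_le_ptilde/maxSA.
Qed.
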